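(* Let $\Gamma(t,s)=\int_{\mathbb{R}}e^{-\rho(\alpha,(s,t])}\mu(\mathrm{d}\alpha)$ be a completely monotone double kernel in which every measure $\rho(\alpha,\cdot)$ is atomless. If $\Gamma$ satisfies condition (K), then it satisfies Assumption (A) with the approximating family $\Gamma_M(t,s)=\int_{[-M,M]}e^{-\rho(\alpha,(s,t])}\mu(\mathrm{d}\alpha)$, $M\in\mathbb{N}^*$.
   Context: Completely monotone double kernel: $\mu$ is a Borel measure on $\mathbb{R}$ finite on compact sets; $(\rho(\alpha,\cdot))_{\alpha\in\mathbb{R}}$ Borel measures on $\mathbb{R}_+$ finite on compact sets with $\rho(\beta,\cdot)-\rho(\alpha,\cdot)\ge0$ for $\alpha\le\beta$; $\Gamma(t,s)<\infty$ for $t>s$; defined for $0<s<t$. Notation $\Delta=\{(t,s):0\le s\le t\}$, $\Delta_T=\{(t,s):0\le s\le t\le T\}$. Condition (K): for every $T$ there exist $\eta>0$, $\gamma\in(0,1/2]$ with $\int_s^t\Gamma(t,u)^2\mathrm{d}u+\int_0^s(\Gamma(t,u)-\Gamma(s,u))^2\mathrm{d}u\le\eta(t-s)^{2\gamma}$ on $\Delta_T$. $\Gamma$ preserves nonnegativity if for every $T>0$, $K$, $x_1,\dots,x_K\in\mathbb{R}$, $0\le t_1<\dots<t_K<T$ with $\sum_{k'\le k}x_{k'}\Gamma(t_k,t_{k'})\ge0$ for all $k$, one has $\sum_{k:t_k\le t}x_k\Gamma(t,t_k)\ge0$ for $t\in[0,T]$. Condition (P): continuous on $\Delta$, $0<\Gamma(s,s)<\infty$,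 preserves nonnegativity, $t\mapsto\Gamma(t,s)$ nonincreasing on $[s,\infty)$. Assumption (A): (K) holds and there are kernels $\Gamma_M$ satisfying (P) with $\int_0^t(\Gamma(t,s)-\Gamma_M(t,s))^2\mathrm{d}s\to0$ for all $t\ge0$ and, for each $T$, constants $\eta>0,\gamma\in(0,1/2]$ with $\int_s^t\Gamma_M(t,u)^2\mathrm{d}u+\int_0^s(\Gamma_M(t,u)-\Gamma_M(s,u))^2\mathrm{d}u\le\eta|t-s|^{2\gamma}$ on $\Delta_T$ for all $M$. *)

From HB Require Import structures.
From mathcomp Require Import all_boot all_order all_algebra.
From mathcomp Require Import all_classical all_reals all_analysis.
Set Implicit Arguments. Unset Strict Implicit. Unset Printing Implicit Defensive.
Import Order.TTheory GRing.Theory Num.Theory.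
Import numFieldNormedType.Exports.
Local Open Scope classical_set_scope.
Local Open Scope ring_scope.

Section defs.
Variable R : realType.
Local Notation leb := (@lebesgue_measure R).

Definition kernel := R -> R -> \bar R.

(* Completely monotone double kernel data: mu Borel measure on R finite on
   compacts; rho a measure on R_+ (represented as a measure on R giving no
   mass to ]-oo,0[), finite on compacts, nondecreasing in alpha (as measures);
   Gamma(t,s) finite for 0 <= s < t. *)
Definition Gamma (mu : {measure set R -> \bar R})
  (rho : R -> {measure set R -> \bar R}) : kernel :=
  fun t s => (\int[mu]_a expeR (- rho a `]s, t]%classic))%E.

Definition GammaM (mu : {measure set R -> \bar R})
  (rho : R -> {measure set R -> \bar R}) (M : nat) : kernel :=
  fun t s => (\int[mu]_(a in `[(- (M%:R : R))%R, (M%:R : R)]%classic) expeR (- rho a `]s, t]%classic))%E.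

Definition cm_double_kernel (mu : {measure set R -> \bar R})
  (rho : R -> {measure set R -> \bar R}) : Prop :=
  [/\ (forall a b : R, (mu `[a, b]%classic < +oo)%E),
      (forall a, rho a `]-oo, 0[%classic = 0%E),
      (forall a x y : R, (rho a `[x, y]%classic < +oo)%E),
      (forall a b : R, a <= b -> forall A, measurable A -> (rho a A <= rho b A)%E)
    & (forall t s : R, 0 <= s < t -> (Gamma mu rho t s < +oo)%E)].

Definition Delta : set (R * R) := [set p | 0 <= p.2 <= p.1].

Definition Kquant (G : kernel) (t s : R) : \bar R :=
  (\int[leb]_(u in (`[s, t[%classic : set R)) (G t u) ^+ 2
   + \int[leb]_(u in (`[0%R, s[%classic : set R)) (G t u - G s u) ^+ 2)%E.

Definition condK (G : kernel) : Prop :=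
  forall T : R, exists eta : R, exists gam : R,
    [/\ 0 < eta, 0 < gam, gam <= 1/2 &
      forall t s, 0 <= s -> s <= t -> t <= T ->
        (Kquant G t s <= (eta * (t - s) `^ (2 * gam))%:E)%E].

Definition preserves_nonnegativity (G : kernel) : Prop :=
  forall (T : R) (K : nat) (x tt : nat -> R), 0 < T ->
    (forall k, (k < K)%N -> 0 <= tt k /\ tt k < T) ->
    (forall i j, (i < j)%N -> (j < K)%N -> tt i < tt j) ->
    (forall k, (k < K)%N ->
       (0 <= \sum_(0 <= k' < k.+1) (x k')%:E * G (tt k) (tt k'))%E) ->
    forall u, 0 <= u <= T ->
       (0 <= \sum_(0 <= k < K | (tt k <= u)%R) (x k)%:E * G u (tt k))%E.

Definition condP (G : kernel) : Prop :=
  [/\ {within Delta, continuous (fun p : R * R => G p.1 p.2)},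
      (forall s, 0 <= s -> (0 < G s s)%E /\ (G s s < +oo)%E),
      preserves_nonnegativity G &
      (forall s t1 t2, 0 <= s -> s <= t1 -> t1 <= t2 -> (G t2 s <= G t1 s)%E)].

End defs.

From HB Require Import structures.
From mathcomp Require Import all_boot all_order all_algebra.
From mathcomp Require Import all_classical all_reals all_analysis.
From mathcomp Require Import measurable_realfun.
From mathcomp.algebra_tactics Require Import ring lra.
Import Order.TTheory GRing.Theory Num.Theory.
Import numFieldNormedType.Exports.
Local Open Scope classical_set_scope.
Local Open Scope ring_scope.
Set Implicit Arguments. Unset Strict Implicit. Unset Printing Implicit Defensive.

(* Write e_a(s,t) = exp (- rho a ]s,t]), so that
   Gamma_M(t,s) = \int_[-M,M] e_a(s,t) mu(da), with e_a(s,t) <= 1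
   nonincreasing in a and e_a(s,t) = e_a(s,m) e_a(m,t).

   Condition (K) passes from Gamma to Gamma_M because 0 <= Gamma_M <= Gamma
   and 0 <= Gamma_M(s,u) - Gamma_M(t,u) <= Gamma(s,u) - Gamma(t,u); the L^2
   convergence is dominated convergence.  Continuity follows from
   |e_a(s',t') - e_a(s,t)| <= rho M (windows around s and t) for a <= M,
   which is small because rho M has no atoms.

   For the preservation of nonnegativity, the partial sums
   F_k(a) = sum_(j <= k) x_j e_a(t_j,t_k) satisfy
   F_(k+1) = e_a(t_k,t_(k+1)) F_k + x_(k+1), and an induction on k shows
   \int v F_k >= 0 for every weight v with \int v >= 0 whose positive values
   are dominated by all its values further left.  The weight e_a(t_k,u) is
   of this kind, and sum_(t_j <= u) x_j Gamma_M(u,t_j) = \int e_a(t_k,u) F_k. *)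

Section ExpMass.
Variable R : realType.
Variable rho : R -> {measure set R -> \bar R}.
Hypothesis rho_fin : forall a x y : R, (rho a `[x, y]%classic < +oo)%E.
Hypothesis rho_homo : forall a b : R, a <= b ->
  forall A, measurable A -> (rho a A <= rho b A)%E.

Definition mass a s t : R := fine (rho a `]s, t]%classic).
Definition expmass a s t : R := expR (- mass a s t).

Lemma massE a s t : rho a `]s, t]%classic = (mass a s t)%:E.
Proof.
rewrite /mass fineK // ge0_fin_numE ?measure_ge0 //.
apply: le_lt_trans (rho_fin a s t); apply: le_measure; rewrite ?inE //.
by apply: subset_itv; rewrite bnd_simp.
Qed.

Lemma expeR_massE a s t : expeR (- rho a `]s, t]%classic) = (expmass a s t)%:E.
Proof. by rewrite massE. Qed.

Lemma mass_ge0 a s t : 0 <= mass a s t.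
Proof. by rewrite /mass fine_ge0 // measure_ge0. Qed.

Lemma expmass_gt0 a s t : 0 < expmass a s t.
Proof. exact: expR_gt0. Qed.

Lemma expmass_le1 a s t : expmass a s t <= 1.
Proof. by rewrite /expmass -expR0 ler_expR lerNl oppr0 mass_ge0. Qed.

Lemma le_mass a s t s' t' :
  `]s, t]%classic `<=` `]s', t']%classic -> mass a s t <= mass a s' t'.
Proof. by move=> st; rewrite -lee_fin -!massE le_measure // inE. Qed.

Lemma mass_homo s t : {homo (fun a => mass a s t) : a b / a <= b}.
Proof. by move=> a b ab; rewrite /= -lee_fin -!massE rho_homo. Qed.

Lemma expmass_nonincr s t : nonincreasing_fun (fun a => expmass a s t).
Proof. by move=> a b ab; rewrite /expmass ler_expR lerN2 (mass_homo s t ab). Qed.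

Lemma expmass_id a s : expmass a s s = 1.
Proof. by rewrite /expmass /mass set_itvoc0 measure0 oppr0 expR0. Qed.

Lemma massD a s m t : s <= m -> m <= t -> mass a s t = mass a s m + mass a m t.
Proof.
move=> sm mt; apply/EFin_inj; rewrite EFinD -!massE -measureU //; last first.
  rewrite -subset0 => x [] /=; rewrite !in_itv /= => /andP[_ xm] /andP[mx _].
  by move: (lt_le_trans mx xm); rewrite ltxx.
congr (rho a _); apply/seteqP; split => x /=; rewrite !in_itv /=.
  by move=> /andP[sx xt]; have [xm|mx] := leP x m; [left|right]; apply/andP.
by case=> /andP[h1 h2]; apply/andP; split; lra.
Qed.

Lemma expmassM a s m t : s <= m -> m <= t ->
  expmass a s t = expmass a s m * expmass a m t.
Proof. by move=> sm mt; rewrite /expmass (massD a sm mt) opprD expRD. Qed.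

Lemma expmass_homo_l a t : {homo expmass a ^~ t : s1 s2 / s1 <= s2}.
Proof.
move=> s1 s2 s12; rewrite /expmass ler_expR lerN2; apply: le_mass.
by apply: subset_itv; rewrite bnd_simp.
Qed.

Lemma expmass_nonincr_r a s : {homo expmass a s : t1 t2 /~ t1 <= t2}.
Proof.
move=> t1 t2 t12; rewrite /expmass ler_expR lerN2; apply: le_mass.
by apply: subset_itv; rewrite bnd_simp.
Qed.

Lemma measurable_expmass D s t :
  measurable D -> measurable_fun D (fun a => expmass a s t).
Proof. by move=> mD; apply: nonincreasing_measurable => //; exact: expmass_nonincr. Qed.

End ExpMass.

Section BoundedIntegral.
Variable R : realType.
Variable mu : {measure set R -> \bar R}.
Variable D : set R.
Hypothesis mD : measurable D.
Hypothesis muDfin : (mu D < +oo)%E.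

Definition bdd_measurable (f : R -> R) :=
  measurable_fun D f /\ exists C, forall a, D a -> `|f a| <= C.

Lemma bdd_measurable_integrable f :
  bdd_measurable f -> mu.-integrable D (EFin \o f).
Proof.
move=> [mf [C hC]]; apply: measurable_bounded_integrable => //.
exists C; split; first exact: num_real.
by move=> y Cy a Da; apply: le_trans (hC a Da) _; exact: ltW.
Qed.

Lemma bdd_measurable_cst c : bdd_measurable (fun => c).
Proof. by split; [exact: measurable_cst | exists `|c|]. Qed.

Lemma bdd_measurableD f g : bdd_measurable f -> bdd_measurable g ->
  bdd_measurable (fun a => f a + g a).
Proof.
move=> [mf [C hC]] [mg [C' hC']]; split; first exact: measurable_funD.
exists (C + C') => a Da; apply: le_trans (ler_normD _ _) _.
by apply: lerD; [exact: hC|exact: hC'].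
Qed.

Lemma bdd_measurableB f g : bdd_measurable f -> bdd_measurable g ->
  bdd_measurable (fun a => f a - g a).
Proof.
move=> [mf [C hC]] [mg [C' hC']]; split; first exact: measurable_funB.
exists (C + C') => a Da; apply: le_trans (ler_normB _ _) _.
by apply: lerD; [exact: hC|exact: hC'].
Qed.

Lemma bdd_measurableM f g : bdd_measurable f -> bdd_measurable g ->
  bdd_measurable (fun a => f a * g a).
Proof.
move=> [mf [C hC]] [mg [C' hC']]; split; first exact: measurable_funM.
by exists (C * C') => a Da; rewrite normrM; apply: ler_pM; [| |exact: hC|exact: hC'].
Qed.

Lemma bdd_measurable_sum n (h : nat -> R -> R) : (forall i, bdd_measurable (h i)) ->
  bdd_measurable (fun a => \sum_(0 <= i < n) h i a).
Proof.
move=> hh; elim: n => [|n IH].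
  by under [X in bdd_measurable X]funext do rewrite big_geq//; exact: bdd_measurable_cst.
under [X in bdd_measurable X]funext do rewrite big_nat_recr//=.
exact: bdd_measurableD.
Qed.

Lemma bdd_measurable_norm f : bdd_measurable f -> bdd_measurable (fun a => `|f a|).
Proof.
move=> [mf [C hC]]; split; first exact: measurableT_comp.
by exists C => a Da; rewrite normr_id; exact: hC.
Qed.

Local Notation Rint f := (\int[mu]_(a in D) f a).

Lemma bdd_RintegralD f g : bdd_measurable f -> bdd_measurable g ->
  Rint (fun a => f a + g a) = Rint f + Rint g.
Proof. by move=> hf hg; rewrite RintegralD //; exact: bdd_measurable_integrable. Qed.

Lemma bdd_RintegralZl c f : bdd_measurable f ->
  Rint (fun a => c * f a) = c * Rint f.
Proof. by move=> hf; rewrite RintegralZl //; exact: bdd_measurable_integrable. Qed.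

Lemma bdd_le_Rintegral f g : bdd_measurable f -> bdd_measurable g ->
  (forall a, D a -> f a <= g a) -> Rint f <= Rint g.
Proof. by move=> hf hg fg; apply: le_Rintegral => //; exact: bdd_measurable_integrable. Qed.

Lemma bdd_Rintegral_sum n (h : nat -> R -> R) : (forall i, bdd_measurable (h i)) ->
  Rint (fun a => \sum_(0 <= i < n) h i a) = \sum_(0 <= i < n) Rint (h i).
Proof.
move=> hh; elim: n => [|n IH].
  by under eq_Rintegral do rewrite big_geq//; rewrite big_geq// Rintegral_cst // mul0r.
under eq_Rintegral do rewrite big_nat_recr//=.
by rewrite bdd_RintegralD ?IH ?big_nat_recr //; exact: bdd_measurable_sum.
Qed.

Lemma bdd_integralE f : bdd_measurable f ->
  (\int[mu]_(a in D) (f a)%:E)%E = (Rint f)%:E.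
Proof.
move=> hf; rewrite /Rintegral fineK //; apply: integrable_fin_num => //.
exact: bdd_measurable_integrable.
Qed.

Definition left_dominated (g : R -> R) :=
  forall a b, a < b -> 0 < g b -> g b <= g a.

Lemma left_dominatedB g c : 0 <= c -> left_dominated g ->
  left_dominated (fun a => g a - c).
Proof.
move=> c0 hg a b ab gb; rewrite lerD2r; apply: hg => //.
by apply: lt_le_trans gb _; rewrite gerDl oppr_le0.
Qed.

Lemma left_dominatedM w g : (forall a, 0 < w a) -> nonincreasing_fun w ->
  left_dominated g -> left_dominated (fun a => w a * g a).
Proof.
move=> w0 wni hg a b ab /=; rewrite pmulr_rgt0 // => gb.
apply: ler_pM; [exact/ltW|exact/ltW|exact/wni/ltW|exact: hg].
Qed.

(* Chebyshev-type inequality: with [lam] the infimum of [w] on [{g > 0}],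
   every point of [{g <= 0}] lies to the right of [{g > 0}], so
   [lam * g <= w * g] pointwise. *)
Lemma Rintegral_nonincr_weight_ge0 (g w : R -> R) :
  bdd_measurable g -> bdd_measurable w -> left_dominated g ->
  nonincreasing_fun w -> (forall a, 0 <= w a <= 1) ->
  0 <= Rint g -> 0 <= Rint (fun a => w a * g a).
Proof.
move=> gg gw Ug hw w01 Ig.
have [lam [l0 hl]] : exists lam, 0 <= lam /\ forall a, lam * g a <= w a * g a.
  have [[a0 ga0]|gle0] := pselect (exists a, 0 < g a); last first.
    exists 1; split => // a; apply: ler_wnM2r; last by case/andP: (w01 a).
    by rewrite leNgt; apply/negP => ga; apply: gle0; exists a.
  set S := [set w a | a in [set a | 0 < g a]].
  have hlb : has_lbound S by exists 0 => y [a _ <-]; case/andP: (w01 a).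
  have ne : S !=set0 by exists (w a0), a0.
  exists (inf S); split.
    by apply: lb_le_inf ne _ => y [a _ <-]; case/andP: (w01 a).
  move=> a; have [ga|ga] := ltP 0 (g a).
    by apply: ler_wpM2r; [exact: ltW|apply: (ge_inf hlb); exists a].
  apply: ler_wnM2r => //; apply: lb_le_inf ne _ => y [b gb <-].
  apply: hw; rewrite leNgt; apply/negP => ab.
  by move: (Ug _ _ ab gb) => /(lt_le_trans gb); rewrite ltNge ga.
apply: le_trans (_ : Rint (fun a => lam * g a) <= _).
  by rewrite bdd_RintegralZl // mulr_ge0.
apply: bdd_le_Rintegral => [||a _]; last exact: hl.
  exact: bdd_measurableM (bdd_measurable_cst _) gg.
exact: bdd_measurableM.
Qed.

End BoundedIntegral.

Section KernelSum.
Variable R : realType.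
Variable mu : {measure set R -> \bar R}.
Variable D : set R.
Hypothesis mD : measurable D.
Hypothesis muDfin : (mu D < +oo)%E.
Hypothesis muD_gt0 : (0 < mu D)%E.
Variable rho : R -> {measure set R -> \bar R}.
Hypothesis rho_fin : forall a x y : R, (rho a `[x, y]%classic < +oo)%E.
Hypothesis rho_homo : forall a b : R, a <= b ->
  forall A, measurable A -> (rho a A <= rho b A)%E.

Local Notation Rint f := (\int[mu]_(a in D) f a).
Local Notation expmass := (expmass rho).

Lemma bdd_measurable_expmass s t : bdd_measurable D (fun a => expmass a s t).
Proof.
split; first exact: measurable_expmass.
by exists 1 => a _; rewrite ger0_norm ?expmass_le1 // ltW // expmass_gt0.
Qed.

Lemma fine_muD_gt0 : 0 < fine (mu D).
Proof. by rewrite fine_gt0 // muD_gt0 muDfin. Qed.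

Variables (K : nat) (x ts : nat -> R).
Hypothesis ts_incr : forall i j, (i < j)%N -> (j < K)%N -> ts i < ts j.

Lemma ts_homo i j : (i <= j)%N -> (j < K)%N -> ts i <= ts j.
Proof. by rewrite leq_eqVlt => /orP[/eqP -> //|ij jK]; exact/ltW/ts_incr. Qed.

Definition kernel_sum k a := \sum_(0 <= j < k.+1) x j * expmass a (ts j) (ts k).

Lemma bdd_measurable_kernel_sum k : bdd_measurable D (kernel_sum k).
Proof.
apply: bdd_measurable_sum => i.
exact: bdd_measurableM (bdd_measurable_cst _ _) (bdd_measurable_expmass _ _).
Qed.

Lemma kernel_sum0 a : kernel_sum 0 a = x 0.
Proof. by rewrite /kernel_sum big_nat1 expmass_id mulr1. Qed.

Lemma kernel_sumS k a : (k.+1 < K)%N ->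
  kernel_sum k.+1 a = expmass a (ts k) (ts k.+1) * kernel_sum k a + x k.+1.
Proof.
move=> kK; rewrite /kernel_sum big_nat_recr //= expmass_id mulr1 mulr_sumr.
congr (_ + _); apply: eq_big_nat => j /andP[_ jk].
rewrite (expmassM rho_fin a (m := ts k)); first ring.
- by apply: ts_homo; [|exact: ltn_trans kK].
- exact/ltW/ts_incr.
Qed.

Hypothesis kernel_sum_ge0 : forall k, (k < K)%N -> 0 <= Rint (kernel_sum k).

Definition admissible_weight (v : R -> R) :=
  [/\ bdd_measurable D v, left_dominated v & 0 <= Rint v].

(* With [w := expmass _ (ts k) (ts k.+1)] and [c] the mean of [v], the weight
   [v * w] splits as [w * (v - c) + c * w], whose first part is admissible
   again and whose second part yields [c * Rint (kernel_sum k.+1) >= 0]. *)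
Lemma admissible_shift k v : admissible_weight v ->
  let c := Rint v / fine (mu D) in
  admissible_weight (fun a => expmass a (ts k) (ts k.+1) * (v a - c)).
Proof.
move=> [gv Uv Iv] c.
have c0 : 0 <= c by rewrite divr_ge0 // ltW // fine_muD_gt0.
have gvc : bdd_measurable D (fun a => v a - c).
  exact: bdd_measurableB gv (bdd_measurable_cst _ _).
split.
- exact: bdd_measurableM (bdd_measurable_expmass _ _) gvc.
- apply: left_dominatedM; [by move=> ?; exact: expmass_gt0|exact: expmass_nonincr|].
  exact: left_dominatedB.
- apply: Rintegral_nonincr_weight_ge0 => //; first exact: bdd_measurable_expmass.
  + exact: left_dominatedB.
  + exact: expmass_nonincr.
  + by move=> a; rewrite expmass_le1 ltW // expmass_gt0.
  + rewrite bdd_RintegralD //; last exact: bdd_measurable_cst.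
    by rewrite Rintegral_cst // mulNr /c divfK ?subrr // gt_eqF // fine_muD_gt0.
Qed.

Lemma weighted_kernel_sum_ge0 k : (k < K)%N -> forall v, admissible_weight v ->
  0 <= Rint (fun a => v a * kernel_sum k a).
Proof.
elim: k => [|k IH] kK v [gv Uv Iv].
  have x0 : 0 <= x 0.
    have := kernel_sum_ge0 kK; under eq_Rintegral do rewrite kernel_sum0.
    by rewrite Rintegral_cst // pmulr_lge0 // fine_muD_gt0.
  by under eq_Rintegral do rewrite kernel_sum0 mulrC; rewrite bdd_RintegralZl // mulr_ge0.
have kK' : (k < K)%N by exact: ltn_trans kK.
set w := fun a => expmass a (ts k) (ts k.+1).
set m := fine (mu D).
set c := Rint v / m.
have gw : bdd_measurable D w by exact: bdd_measurable_expmass.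
have gF := bdd_measurable_kernel_sum k.
have gvw : bdd_measurable D (fun a => v a * w a) by exact: bdd_measurableM.
have gwF : bdd_measurable D (fun a => w a * kernel_sum k a) by exact: bdd_measurableM.
have Ev : Rint v = c * m by rewrite /c divfK // gt_eqF // fine_muD_gt0.
have E1 : Rint (fun a => v a * kernel_sum k.+1 a) =
    Rint (fun a => v a * w a * kernel_sum k a) + x k.+1 * Rint v.
  under eq_Rintegral do rewrite kernel_sumS // mulrDr mulrA (mulrC (v _) (x _)).
  by rewrite bdd_RintegralD ?bdd_RintegralZl //; [exact: bdd_measurableM|
    exact: bdd_measurableM (bdd_measurable_cst _ _) gv].
have E2 : Rint (kernel_sum k.+1) = Rint (fun a => w a * kernel_sum k a) + x k.+1 * m.
  under eq_Rintegral do rewrite kernel_sumS //.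
  by rewrite bdd_RintegralD ?Rintegral_cst //; exact: bdd_measurable_cst.
have E3 : Rint (fun a => w a * (v a - c) * kernel_sum k a) +
    c * Rint (fun a => w a * kernel_sum k a) = Rint (fun a => v a * w a * kernel_sum k a).
  rewrite -bdd_RintegralZl // -bdd_RintegralD //; last 2 first.
  - exact: bdd_measurableM (bdd_measurableM gw (bdd_measurableB gv (bdd_measurable_cst _ _))) gF.
  - exact: bdd_measurableM (bdd_measurable_cst _ _) gwF.
  by apply: eq_Rintegral => a _; ring.
have c0 : 0 <= c by rewrite divr_ge0 // ltW // fine_muD_gt0.
have IHw : 0 <= Rint (fun a => w a * (v a - c) * kernel_sum k a) :=
  IH kK' _ (admissible_shift k (And3 gv Uv Iv)).
have := mulr_ge0 c0 (kernel_sum_ge0 kK).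
rewrite E1 -E3 E2 Ev => h; rewrite -addrA; apply: addr_ge0 IHw _.
by rewrite mulrCA -mulrDr.
Qed.

End KernelSum.

Lemma big_nat_downclosed_prefix (V : nmodType) (f : nat -> V) (P : pred nat) K :
  (forall i j, (i <= j)%N -> (j < K)%N -> P j -> P i) ->
  exists m, [/\ (m <= K)%N, (forall k, (k < m)%N -> P k) &
    \sum_(0 <= k < K | P k) f k = \sum_(0 <= k < m) f k].
Proof.
elim: K => [|K IH] hP; first by exists 0%N; split => //; rewrite !big_geq.
have [PK|PK] := boolP (P K).
  have Pk k : (k < K.+1)%N -> P k by move=> kK; apply: (hP k K).
  exists K.+1; split => //; rewrite big_nat_cond [RHS]big_nat_cond.
  by apply: eq_bigl => k; case: (ltnP k K.+1) => /= kK; rewrite ?andbF ?andbT ?Pk.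
have [|m [mK hm hs]] := IH; first by move=> i j ij jK; apply: hP => //; exact: ltnW.
exists m; split => //; first exact: leqW.
by rewrite big_mkcond big_nat_recr //= (negbTE PK) addr0 -big_mkcond.
Qed.

Definition GammaD (R : realType) (mu : {measure set R -> \bar R}) (D : set R)
    (rho : R -> {measure set R -> \bar R}) : R -> R -> \bar R :=
  fun t s => (\int[mu]_(a in D) expeR (- rho a `]s, t]%classic))%E.

Section GammaDNonneg.
Variable R : realType.
Variable mu : {measure set R -> \bar R}.
Variable D : set R.
Hypothesis mD : measurable D.
Hypothesis muDfin : (mu D < +oo)%E.
Variable rho : R -> {measure set R -> \bar R}.
Hypothesis rho_fin : forall a x y : R, (rho a `[x, y]%classic < +oo)%E.
Hypothesis rho_homo : forall a b : R, a <= b ->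
  forall A, measurable A -> (rho a A <= rho b A)%E.

Local Notation Rint f := (\int[mu]_(a in D) f a).
Local Notation expmass := (expmass rho).

Lemma GammaDE t s : GammaD mu D rho t s = (Rint (fun a => expmass a s t))%:E.
Proof.
rewrite /GammaD; under eq_integral do rewrite expeR_massE //.
exact/bdd_integralE/bdd_measurable_expmass.
Qed.

Lemma sum_GammaDE n (y s : nat -> R) t :
  (\sum_(0 <= j < n) (y j)%:E * GammaD mu D rho t (s j))%E =
  (Rint (fun a => \sum_(0 <= j < n) y j * expmass a (s j) t))%:E.
Proof.
have hb j : bdd_measurable D (fun a => y j * expmass a (s j) t).
  exact: bdd_measurableM (bdd_measurable_cst _ _) (bdd_measurable_expmass _ _ _ _ _).
under eq_bigr do rewrite GammaDE -EFinM.
rewrite sumEFin bdd_Rintegral_sum //; congr EFin; apply: eq_bigr => j _.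
by rewrite bdd_RintegralZl //; exact: bdd_measurable_expmass.
Qed.

Hypothesis muD_gt0 : (0 < mu D)%E.

Lemma GammaD_preserves_nonnegativity : preserves_nonnegativity (GammaD mu D rho).
Proof.
move=> T K x ts _ _ ts_incr hyp u /andP[_ _].
have kernel_sum_ge0 k : (k < K)%N -> 0 <= Rint (kernel_sum rho x ts k).
  by move=> kK; have := hyp k kK; rewrite sum_GammaDE lee_fin.
have [|m [mK hm ->]] := @big_nat_downclosed_prefix _
    (fun k => (x k)%:E * GammaD mu D rho u (ts k))%E (fun k => ts k <= u) K.
  by move=> i j ij jK; apply: le_trans; exact: (ts_homo ts_incr ij jK).
case: m mK hm => [|k] kK hk; first by rewrite big_geq.
have tku : ts k <= u by exact: hk.
rewrite sum_GammaDE lee_fin.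
have -> : Rint (fun a => \sum_(0 <= j < k.+1) x j * expmass a (ts j) u) =
    Rint (fun a => expmass a (ts k) u * kernel_sum rho x ts k a).
  apply: eq_Rintegral => a _; rewrite /kernel_sum mulr_sumr.
  apply: eq_big_nat => j /andP[_ jk]; rewrite (expmassM rho_fin _ (m := ts k)) //; first ring.
  by apply: (ts_homo ts_incr).
apply: (weighted_kernel_sum_ge0 mD muDfin muD_gt0 rho_fin rho_homo ts_incr) => //.
split; first exact: bdd_measurable_expmass.
- by move=> a b ab _; apply: expmass_nonincr => //; exact: ltW.
- by apply: Rintegral_ge0 => a _; exact/ltW/expmass_gt0.
Qed.

End GammaDNonneg.

Lemma expRN_lipschitz (R : realType) (x y : R) : 0 <= x -> 0 <= y ->
  `|expR (- x) - expR (- y)| <= `|x - y|.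
Proof.
wlog xy : x y / x <= y.
  move=> h x0 y0; have [|yx] := leP x y; first by move=> xy; exact: h.
  by rewrite distrC (distrC x); apply: h => //; exact: ltW.
move=> x0 _.
have eyx : expR (- y) = expR (- x) * expR (- (y - x)) by rewrite -expRD; congr expR; ring.
have ex1 : expR (- x) <= 1 by rewrite -expR0 ler_expR lerNl oppr0.
have exy1 : expR (- (y - x)) <= 1 by rewrite -expR0 ler_expR lerNl oppr0 subr_ge0.
rewrite (distrC x) (ger0_norm (_ : 0 <= y - x)) ?subr_ge0 // ger0_norm; last first.
  by rewrite eyx subr_ge0 ger_pMr ?expR_gt0.
rewrite eyx -{1}(mulr1 (expR (- x))) -mulrBr.
apply: le_trans (_ : 1 * (1 - expR (- (y - x))) <= _).
  by apply: ler_wpM2r; rewrite ?subr_ge0.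
by rewrite mul1r; have := expR_ge1Dx (- (y - x)); lra.
Qed.

Lemma itv_oc_subset_windows (R : realType) (s t p q p' q' d : R) :
  `|s - p| < d -> `|t - q| < d -> `|s - p'| < d -> `|t - q'| < d ->
  `]p, q]%classic `<=` `]p', q']%classic `|`
    (`]s - d, s + d]%classic `|` `]t - d, t + d]%classic).
Proof.
rewrite !ltr_distlC => /andP[? ?] /andP[? ?] /andP[? ?] /andP[? ?] y /=.
rewrite !in_itv /= => /andP[py yq].
have [yp'|p'y] := leP y p'; first by right; left; apply/andP; split; lra.
have [yq'|q'y] := leP y q'; first by left; apply/andP.
by right; right; apply/andP; split; lra.
Qed.

Section MassContinuity.
Variable R : realType.
Variable rho : R -> {measure set R -> \bar R}.
Hypothesis rho_fin : forall a x y : R, (rho a `[x, y]%classic < +oo)%E.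
Hypothesis rho_atomless : forall a x : R, rho a [set x] = 0%E.

Local Notation mass := (mass rho).

(* The intervals ]x - 1/(n+1), x + 1/(n+1)] decrease to {x}, which has no mass. *)
Lemma mass_window b x eta : 0 < eta ->
  exists2 d, 0 < d & forall d', d' <= d -> mass b (x - d') (x + d') < eta.
Proof.
move=> eta0.
pose F n := `](x - n.+1%:R^-1), (x + n.+1%:R^-1)]%classic.
have mF n : measurable (F n) by exact: measurable_itv.
have capF : \bigcap_n F n = [set x].
  apply/seteqP; split => [y Fy|y ->{y} n _]; last first.
    by rewrite /F /= in_itv /= gtrDl oppr_lt0 invr_gt0 ltr0n lerDl invr_ge0 ler0n.
  apply: contrapT => /eqP; rewrite -subr_eq0 -normr_gt0 => d0.
  have [N _ hN] := near_infty_natSinv_lt (PosNum d0).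
  have := Fy N I; rewrite /F /= in_itv /= => /andP[h1 h2].
  have := hN N (leqnn N); rewrite /= ltNge => /negP; apply.
  move: h1 h2; move: (N.+1%:R^-1) => e h1 h2.
  by rewrite ler_norml; apply/andP; split; lra.
have F0 : (rho b (F 0%N) < +oo)%E.
  apply: le_lt_trans (rho_fin b (x - 1) (x + 1)); apply: le_measure; rewrite ?inE //.
  by apply: subset_itv; rewrite bnd_simp invr1.
have Fni : nonincreasing_seq F.
  move=> n k nk; rewrite subsetEset /F; apply: subset_itv; rewrite bnd_simp.
    by rewrite lerD2l lerN2 lef_pV2 ?posrE ?ltr0n // ler_nat ltnS.
  by rewrite lerD2l lef_pV2 ?posrE ?ltr0n // ler_nat ltnS.
have := nonincreasing_cvg_mu F0 mF (bigcap_measurableType (fun k _ => mF k)) Fni.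
rewrite capF rho_atomless => /fine_cvg /(cvgrPdist_lt _ _) /(_ eta eta0) [N _ hN].
exists N.+1%:R^-1 => [|d' d'N]; first by rewrite invr_gt0 ltr0n.
have : mass b (x - N.+1%:R^-1) (x + N.+1%:R^-1) < eta.
  by have := hN N (leqnn N); rewrite /= sub0r normrN ger0_norm ?fine_ge0 ?measure_ge0.
apply: le_lt_trans; apply: (le_mass rho_fin).
by apply: subset_itv; rewrite bnd_simp ?lerD2l ?lerN2.
Qed.

Lemma mass_le_windows a s t p q p' q' d :
  `|s - p| < d -> `|t - q| < d -> `|s - p'| < d -> `|t - q'| < d ->
  mass a p q <= mass a p' q' + (mass a (s - d) (s + d) + mass a (t - d) (t + d)).
Proof.
move=> sp tq sp' tq'; rewrite -lee_fin !EFinD -!massE //.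
set W := `]s - d, s + d]%classic `|` `]t - d, t + d]%classic.
have mW : measurable W by apply: measurableU; exact: measurable_itv.
apply: (@le_trans _ _ (rho a (`]p', q']%classic `|` W))).
  apply: le_measure; rewrite ?inE //; first exact: measurableU.
  exact: itv_oc_subset_windows.
apply: le_trans (measureU2 _ (measurable_itv _) mW) _.
by rewrite leeD2l //; apply: measureU2; exact: measurable_itv.
Qed.

Lemma expmass_dist_le a s t s' t' d : `|s - s'| < d -> `|t - t'| < d ->
  `|expmass rho a s' t' - expmass rho a s t|
    <= mass a (s - d) (s + d) + mass a (t - d) (t + d).
Proof.
move=> hs ht; have d0 : 0 < d by apply: le_lt_trans hs.
have s0 : `|s - s| < d by rewrite subrr normr0.
have t0 : `|t - t| < d by rewrite subrr normr0.
rewrite /expmass.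
apply: le_trans (expRN_lipschitz (mass_ge0 rho a s' t') (mass_ge0 rho a s t)) _.
have := mass_le_windows a hs ht s0 t0; have := mass_le_windows a s0 t0 hs ht.
by rewrite ler_norml => ? ?; apply/andP; split; lra.
Qed.

End MassContinuity.

Section GammaDContinuity.
Variable R : realType.
Variable mu : {measure set R -> \bar R}.
Variable D : set R.
Hypothesis mD : measurable D.
Hypothesis muDfin : (mu D < +oo)%E.
Variable rho : R -> {measure set R -> \bar R}.
Hypothesis rho_fin : forall a x y : R, (rho a `[x, y]%classic < +oo)%E.
Hypothesis rho_homo : forall a b : R, a <= b ->
  forall A, measurable A -> (rho a A <= rho b A)%E.
Hypothesis rho_atomless : forall a x : R, rho a [set x] = 0%E.
Variable b : R.
Hypothesis D_ub : forall a, D a -> a <= b.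

Local Notation Rint f := (\int[mu]_(a in D) f a).

Lemma GammaD_dist_le s t s' t' d : `|s - s'| < d -> `|t - t'| < d ->
  `|Rint (fun a => expmass rho a s' t') - Rint (fun a => expmass rho a s t)|
    <= (mass rho b (s - d) (s + d) + mass rho b (t - d) (t + d)) * fine (mu D).
Proof.
move=> hs ht.
have hb p q : bdd_measurable D (fun a => expmass rho a p q).
  exact: bdd_measurable_expmass.
rewrite -RintegralB; [|exact: mD|exact: bdd_measurable_integrable..].
apply: le_trans (le_normr_Rintegral _ _) _ => //.
  exact/bdd_measurable_integrable/bdd_measurableB.
rewrite -Rintegral_cst //; apply: bdd_le_Rintegral => //.
- exact/bdd_measurable_norm/bdd_measurableB.
- exact: bdd_measurable_cst.
move=> a Da; apply: le_trans (expmass_dist_le rho_fin a hs ht) _.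
by apply: lerD; apply: mass_homo => //; exact: D_ub.
Qed.

Lemma GammaD_continuous : continuous (fun p : R * R => GammaD mu D rho p.1 p.2).
Proof.
have -> : (fun p : R * R => GammaD mu D rho p.1 p.2) =
    (fun p => (Rint (fun a => expmass rho a p.2 p.1))%:E).
  by apply: funext => p; rewrite GammaDE.
move=> p; apply: cvg_EFin; first exact: nearW.
apply/cvgrPdist_lt => eps eps0.
set m := fine (mu D).
have m0 : 0 <= m by rewrite fine_ge0 // measure_ge0.
set eta := eps / (2 * (m + 1)).
have eta0 : 0 < eta by rewrite divr_gt0 // mulr_gt0 // ltr_wpDl.
have eta_m : (eta + eta) * m < eps.
  rewrite (_ : eta + eta = eps / (m + 1)); last by rewrite /eta; field; rewrite gt_eqF // ltr_wpDl.
  by rewrite mulrAC ltr_pdivrMr ?ltr_wpDl // ltr_pM2l // ltrDl ltr01.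
have [d1 d10 h1] := mass_window rho_fin rho_atomless b p.2 eta0.
have [d2 d20 h2] := mass_window rho_fin rho_atomless b p.1 eta0.
near=> q.
have [hq1 hq2] : ball p.1 (Num.min d1 d2) q.1 /\ ball p.2 (Num.min d1 d2) q.2.
  near: q; exists (ball p.1 (Num.min d1 d2), ball p.2 (Num.min d1 d2)) => /=.
    by split; apply: nbhsx_ballx; rewrite lt_min d10 d20.
  by move=> [x1 x2] [/= hh1 hh2]; split.
rewrite -ball_normE /= in hq1 hq2.
rewrite distrC; apply: le_lt_trans (GammaD_dist_le hq2 hq1) (le_lt_trans _ eta_m).
apply: ler_wpM2r => //; apply: lerD; apply/ltW; [apply: h1|apply: h2];
  by rewrite ge_min lexx ?orbT.
Unshelve. all: by end_near.
Qed.

End GammaDContinuity.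

Lemma measurable_fun_nondecreasing_on (R : realType) (D : set R) (f : R -> R) :
  measurable D -> (forall x y z, D x -> D z -> x <= y -> y <= z -> D y) ->
  (forall x y, D x -> D y -> x <= y -> f x <= f y) -> measurable_fun D f.
Proof.
move=> mD iD f_nd.
apply: (measurability (@RGenCInfty.G R)) => [|/= _ [_] [r] -> <-].
  exact: RGenCInfty.measurableE.
apply: is_interval_measurable => s t [Ds fs] [Dt ft] u /andP[su ut].
have Du : D u by exact: iD Ds Dt su ut.
split => //; move: fs; rewrite /= !in_itv /= !andbT => fs.
by apply: le_trans fs _; exact: f_nd.
Qed.

Lemma Rintegral_le_setT (R : realType) (mu : {measure set R -> \bar R})
    (D : set R) (f : R -> R) :
  measurable D -> mu.-integrable setT (EFin \o f) -> (forall x, 0 <= f x) ->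
  \int[mu]_(x in D) f x <= \int[mu]_x f x.
Proof.
move=> mD intf f0.
rewrite -lee_fin /Rintegral !fineK; last 2 first.
- exact: integrable_fin_num.
- exact/integrable_fin_num/(integrableS _ _ _ intf).
apply: ge0_subset_integral => //; last by move=> x _; rewrite lee_fin.
by case/integrableP: intf.
Qed.

Lemma le_integral_sqr (R : realType) (A : set R) (f g : R -> R) :
  measurable A -> measurable_fun A f -> measurable_fun A g ->
  (forall u, A u -> 0 <= f u <= g u) ->
  (\int[@lebesgue_measure R]_(u in A) ((f u) ^+ 2)%:E <=
   \int[@lebesgue_measure R]_(u in A) ((g u) ^+ 2)%:E)%E.
Proof.
move=> mA mf mg fg; apply: ge0_le_integral => //.
- by move=> u _; rewrite lee_fin sqr_ge0.
- by apply/measurable_EFinP; exact: measurable_funX.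
- by apply/measurable_EFinP; exact: measurable_funX.
move=> u /fg /andP[f0 fg']; rewrite lee_fin lerXn2r // nnegrE //.
exact: le_trans fg'.
Qed.

Definition sym_itv (R : realType) (M : nat) : set R :=
  `[(- (M%:R : R))%R, (M%:R : R)]%classic.

Lemma measurable_sym_itv (R : realType) M : measurable (@sym_itv R M).
Proof. exact: measurable_itv. Qed.

Lemma sym_itv_homo (R : realType) :
  {homo @sym_itv R : n m / (n <= m)%N >-> (n <= m)%O}.
Proof.
move=> n m nm; rewrite subsetEset; apply: subset_itv; rewrite bnd_simp.
  by rewrite lerN2 ler_nat.
by rewrite ler_nat.
Qed.

Lemma bigcup_sym_itv (R : realType) : \bigcup_n (@sym_itv R n) = setT.
Proof.
apply/seteqP; split => // x _; exists (Num.trunc `|x|).+1 => //.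
by rewrite /sym_itv /= in_itv /= -ler_norml; apply/ltW/truncnS_gt.
Qed.

Section Approximation.
Variable R : realType.
Variable mu : {measure set R -> \bar R}.
Variable rho : R -> {measure set R -> \bar R}.
Hypothesis mu_fin : forall a b : R, (mu `[a, b]%classic < +oo)%E.
Hypothesis rho_fin : forall a x y : R, (rho a `[x, y]%classic < +oo)%E.
Hypothesis rho_homo : forall a b : R, a <= b ->
  forall A, measurable A -> (rho a A <= rho b A)%E.
Hypothesis Gamma_fin : forall t s : R, 0 <= s < t -> (Gamma mu rho t s < +oo)%E.

Local Notation expmass := (expmass rho).
Local Notation leb := (@lebesgue_measure R).

Definition GammaR t s := fine (Gamma mu rho t s).
Definition GammaMR M t s := \int[mu]_(a in sym_itv M) expmass a s t.

Lemma GammaE t s : Gamma mu rho t s = (\int[mu]_a (expmass a s t)%:E)%E.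
Proof. by apply: eq_integral => a _; rewrite expeR_massE. Qed.

Lemma Gamma_ge0 t s : (0 <= Gamma mu rho t s)%E.
Proof. by rewrite GammaE; apply: integral_ge0 => a _; rewrite lee_fin ltW ?expmass_gt0. Qed.

Lemma GammaRE t s : 0 <= s < t -> Gamma mu rho t s = (GammaR t s)%:E.
Proof. by move=> st; rewrite /GammaR fineK // ge0_fin_numE ?Gamma_ge0 ?Gamma_fin. Qed.

Lemma integrable_expmass t s : 0 <= s < t ->
  mu.-integrable setT (EFin \o (fun a => expmass a s t)).
Proof.
move=> st; apply/integrableP; split.
  by apply/measurable_EFinP; exact: measurable_expmass.
under eq_integral do rewrite /= ger0_norm ?(ltW (expmass_gt0 _ _ _ _)) //.
by rewrite -GammaE; exact: Gamma_fin.
Qed.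

Lemma GammaR_Rintegral t s : GammaR t s = \int[mu]_a expmass a s t.
Proof. by rewrite /GammaR GammaE. Qed.

Lemma GammaME M t s : GammaM mu rho M t s = (GammaMR M t s)%:E.
Proof. exact: (GammaDE (measurable_itv _) (mu_fin _ _) rho_fin rho_homo). Qed.

Lemma GammaMR_ge0 M t s : 0 <= GammaMR M t s.
Proof. by apply: Rintegral_ge0 => a _; rewrite ltW ?expmass_gt0. Qed.

Lemma GammaMR_le_GammaR M t s : 0 <= s < t -> GammaMR M t s <= GammaR t s.
Proof.
move=> st; rewrite GammaR_Rintegral; apply: Rintegral_le_setT.
- exact: measurable_itv.
- exact: integrable_expmass.
- by move=> a; rewrite ltW ?expmass_gt0.
Qed.

Lemma GammaMR_homo_l M t : {homo GammaMR M t : u1 u2 / u1 <= u2}.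
Proof.
have hb p q : bdd_measurable (sym_itv M) (fun a => expmass a p q).
  by apply: bdd_measurable_expmass => //; exact: measurable_itv.
move=> u1 u2 u12; apply: (bdd_le_Rintegral (measurable_sym_itv _) (mu_fin _ _) (hb _ _) (hb _ _)).
by move=> a _; exact: expmass_homo_l.
Qed.

Lemma GammaMR_nonincr_r M s : {homo (GammaMR M)^~ s : t1 t2 /~ t1 <= t2}.
Proof.
have hb p q : bdd_measurable (sym_itv M) (fun a => expmass a p q).
  by apply: bdd_measurable_expmass => //; exact: measurable_itv.
move=> t1 t2 t12; apply: (bdd_le_Rintegral (measurable_sym_itv _) (mu_fin _ _) (hb _ _) (hb _ _)).
by move=> a _; exact: expmass_nonincr_r.
Qed.

Lemma GammaR_homo_l t u1 u2 : 0 <= u1 -> u1 <= u2 -> u2 < t -> GammaR t u1 <= GammaR t u2.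
Proof.
move=> u10 u12 u2t; rewrite !GammaR_Rintegral; apply: le_Rintegral => //.
- by apply: integrable_expmass; rewrite u10 (le_lt_trans u12).
- by apply: integrable_expmass; rewrite (le_trans u10 u12).
by move=> a _; exact: expmass_homo_l.
Qed.

Lemma GammaMR_sub_le M s t u : 0 <= u -> u < s -> s <= t ->
  0 <= GammaMR M s u - GammaMR M t u <= GammaR s u - GammaR t u.
Proof.
move=> u0 us st; have ut := lt_le_trans us st.
have hb p q : bdd_measurable (sym_itv M) (fun a => expmass a p q).
  by apply: bdd_measurable_expmass => //; exact: measurable_itv.
rewrite /GammaMR -RintegralB; [|exact: measurable_itv|
  apply: (bdd_measurable_integrable (measurable_sym_itv _) (mu_fin _ _));
  exact: hb..].
have hus : 0 <= u < s by rewrite u0.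
have hut : 0 <= u < t by rewrite u0.
rewrite !GammaR_Rintegral -RintegralB; [|exact: measurableT|exact: integrable_expmass..].
apply/andP; split.
  by apply: Rintegral_ge0 => a _; rewrite subr_ge0 expmass_nonincr_r.
apply: Rintegral_le_setT; first exact: measurable_itv.
  rewrite (_ : _ \o _ = (EFin \o (fun a => expmass a u s)) \- (EFin \o (fun a => expmass a u t)))%E.
    exact: (integrableB measurableT (integrable_expmass hus) (integrable_expmass hut)).
  by apply: funext => a; rewrite /= EFinB.
by move=> a; rewrite subr_ge0 expmass_nonincr_r.
Qed.

Lemma measurable_GammaMR M t A : measurable A -> measurable_fun A (GammaMR M t).
Proof. by move=> mA; apply: nondecreasing_measurable => //; exact: GammaMR_homo_l. Qed.

Lemma measurable_GammaR (t a b : R) : 0 <= a -> b <= t ->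
  measurable_fun `[a, b[%classic (GammaR t).
Proof.
move=> a0 bt; apply: measurable_fun_nondecreasing_on; first exact: measurable_itv.
  move=> x y z; rewrite /= !in_itv /= => /andP[ax _] /andP[_ zb] xy yz.
  by rewrite (le_trans ax xy) (le_lt_trans yz zb).
move=> x y; rewrite /= !in_itv /= => /andP[ax xb] /andP[ay yb] xy.
by apply: GammaR_homo_l => //; [exact: le_trans ax|exact: lt_le_trans yb bt].
Qed.


Lemma Kquant_GammaM_le M t s : 0 <= s -> s <= t ->
  (Kquant (GammaM mu rho M) t s <= Kquant (Gamma mu rho) t s)%E.
Proof.
move=> s0 st; have mGM := measurable_GammaMR M.
have in_st u : `[s, t[%classic u -> 0 <= u < t.
  by rewrite /= in_itv /= => /andP[su ->]; rewrite (le_trans s0 su).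
have in_0s u : `[0, s[%classic u -> 0 <= u < s by rewrite /= in_itv.
rewrite /Kquant; apply: leeD.
- under eq_integral do rewrite GammaME -EFin_expe.
  under [X in (_ <= X)%E]eq_integral => u /[!inE] /in_st ut do
    rewrite GammaRE // -EFin_expe.
  apply: le_integral_sqr; [exact: measurable_itv|exact: mGM|
    exact: measurable_GammaR (le_trans s0 (lexx s)) (lexx t)|].
  move=> u /in_st ut; rewrite GammaMR_ge0 /=; exact: GammaMR_le_GammaR.
- under eq_integral do rewrite !GammaME -EFinB -EFin_expe -opprB sqrrN.
  under [X in (_ <= X)%E]eq_integral => u /[!inE] /in_0s /andP[u0 us] do
    rewrite !GammaRE ?u0 ?(lt_le_trans us st) // -EFinB -EFin_expe -opprB sqrrN.
  apply: le_integral_sqr; [exact: measurable_itv| | |].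
  + by apply: measurable_funB; exact: mGM.
  + by apply: measurable_funB; exact: measurable_GammaR.
  by move=> u /in_0s /andP[u0 us]; exact: GammaMR_sub_le.
Qed.

Lemma GammaMR_cvg t s : 0 <= s < t -> GammaMR n t s @[n --> \oo] --> GammaR t s.
Proof.
move=> st; apply: fine_cvg; rewrite -GammaRE // GammaE -(bigcup_sym_itv R).
apply: ge0_nondecreasing_set_cvg_integral.
- exact: sym_itv_homo.
- exact: measurable_sym_itv.
- move=> i; apply/(measurable_EFinP _ (fun a => expmass a s t)).
  by apply: measurable_expmass => //; exact: measurable_sym_itv.
- by move=> i a _; rewrite lee_fin ltW ?expmass_gt0.
Qed.

Lemma Gamma_L2_cvg t : 0 <= t ->
  (\int[@lebesgue_measure R]_(u in `[0%R, t[%classic) (Gamma mu rho t u) ^+ 2 < +oo)%E ->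
  (\int[@lebesgue_measure R]_(s in `[0%R, t[%classic)
     (Gamma mu rho t s - GammaM mu rho M t s) ^+ 2)%E @[M --> \oo] --> 0%E.
Proof.
move=> t0 Gamma2_fin.
have in0t u : `[0%R, t[%classic u -> 0 <= u < t by rewrite /= in_itv.
have diffE u : `[0%R, t[%classic u -> forall n,
    ((Gamma mu rho t u - GammaM mu rho n t u) ^+ 2)%E = ((GammaR t u - GammaMR n t u) ^+ 2)%:E.
  by move=> /in0t ut n; rewrite GammaRE // GammaME -EFinB -EFin_expe.
have sqrE u : `[0%R, t[%classic u -> ((Gamma mu rho t u) ^+ 2)%E = ((GammaR t u) ^+ 2)%:E.
  by move=> /in0t ut; rewrite GammaRE // -EFin_expe.
have mGR : measurable_fun `[0%R, t[%classic (GammaR t) by exact: measurable_GammaR.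
rewrite -(integral0 leb `[0%R, t[%classic).
apply: (@dominated_cvg _ _ _ leb _ (measurable_itv _)
  (fun n u => ((Gamma mu rho t u - GammaM mu rho n t u) ^+ 2)%E) (cst 0%E)
  (fun u => ((Gamma mu rho t u) ^+ 2)%E)).
- move=> n; apply: (eq_measurable_fun (EFin \o (fun u => (GammaR t u - GammaMR n t u) ^+ 2))).
    by move=> u; rewrite inE => /diffE ->.
  apply/measurable_EFinP/measurable_funX/measurable_funB => //.
  exact: measurable_GammaMR.
- move=> u /[dup] /in0t ut /diffE hu; under eq_fun do rewrite hu.
  apply: cvg_EFin; first exact: nearW.
  have diff_cvg : GammaR t u - GammaMR n t u @[n --> \oo] --> 0.
    rewrite -(subrr (GammaR t u)); apply: cvgB; [exact: cvg_cst|exact: GammaMR_cvg].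
  by under eq_fun do rewrite expr2; rewrite -(mulr0 0); exact: cvgM.
- by move=> u /sqrE ->.
- apply/integrableP; split.
    apply: (eq_measurable_fun (EFin \o (fun u => (GammaR t u) ^+ 2))).
      by move=> u; rewrite inE => /sqrE ->.
    exact/measurable_EFinP/measurable_funX.
  by under eq_integral do rewrite (gee0_abs (sqre_ge0 _)).
- move=> n u /[dup] /in0t ut /[dup] /diffE -> /sqrE ->.
  have := GammaMR_le_GammaR n ut; have := GammaMR_ge0 n t u.
  by rewrite gee0_abs ?lee_fin ?sqr_ge0 // => ? ?; rewrite lerXn2r ?nnegrE; lra.
Qed.

End Approximation.

Theorem mainTheorem7 (R : realType) (mu : {measure set R -> \bar R})
  (rho : R -> {measure set R -> \bar R}) :
  cm_double_kernel mu rho ->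
  (forall (a x : R), rho a [set x] = 0%E) ->
  condK (Gamma mu rho) ->
  [/\ condK (Gamma mu rho),
      (forall M : nat, (0 < M)%N -> (0 < mu `[(- (M%:R : R))%R, (M%:R : R)]%classic)%E ->
         condP (GammaM mu rho M)),
      (forall t : R, 0 <= t ->
         (fun M : nat => (\int[@lebesgue_measure R]_(s in `[0%R, t[%classic)
             (Gamma mu rho t s - GammaM mu rho M t s) ^+ 2)%E)
           @ \oo --> 0%E) &
      (forall T : R, exists eta : R, exists gam : R,
         [/\ 0 < eta, 0 < gam, gam <= 1/2 &
           forall (M : nat) (t s : R), (0 < M)%N -> 0 <= s -> s <= t -> t <= T ->
             (Kquant (GammaM mu rho M) t s <= (eta * (t - s) `^ (2 * gam))%:E)%E])].
Proof.
move=> [mu_fin _ rho_fin rho_homo Gamma_fin] rho_atomless hK; split => //.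
- move=> M _ muM_gt0; have mM := @measurable_sym_itv R M; split.
  + apply/continuous_subspaceT.
    apply: (GammaD_continuous mM (mu_fin _ _) rho_fin rho_homo rho_atomless (b := M%:R)).
    by move=> a; rewrite /sym_itv /= in_itv /= => /andP[].
  + move=> s _; rewrite /GammaM; under eq_integral do rewrite set_itvoc0 measure0 oppe0 expeR0.
    by rewrite integral_cst // mul1e.
  + exact: (GammaD_preserves_nonnegativity mM (mu_fin _ _) rho_fin rho_homo muM_gt0).
  + move=> s t1 t2 _ _ t12; rewrite !(GammaME mu_fin rho_fin rho_homo) lee_fin.
    exact: (GammaMR_nonincr_r mu_fin rho_fin rho_homo).
- move=> t t0; apply: (Gamma_L2_cvg mu_fin rho_fin rho_homo Gamma_fin t0).
  have [eta [gam [_ _ _ /(_ t 0 (lexx 0) t0 (lexx t)) Kt]]] := hK t.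
  apply: le_lt_trans (le_trans _ Kt) (ltry _).
  by rewrite /Kquant leeDl //; apply: integral_ge0 => u _; exact: sqre_ge0.
- move=> T; have [eta [gam [eta0 gam0 gam_le hb]]] := hK T.
  exists eta, gam; split => // M t s _ s0 st tT.
  exact: le_trans (Kquant_GammaM_le mu_fin rho_fin rho_homo Gamma_fin M s0 st) (hb t s s0 st tT).
Qed.
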